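(* Let $\bar O=O_1,\dots,O_k$ be fresh propositional constants, $\Gamma=\{x_i:A_i\}_{1\le i\le n}$, $\Delta=\{a_j:B_j\}_{1\le j\le m}$ and $1\le l\le k$. If $\Gamma\vdash_{\bar O}t:O_l;\Delta$, then $t=x_j$ for some $1\le j\le n$ and $A_j=O_l$.
   Context: $\lambda\mu$-terms: $t::= x\mid \lambda x.t\mid (t\;t)\mid \mu a.t\mid (a\;t)$ over disjoint infinite sets of $\lambda$-variables and $\mu$-variables. Types are built from propositional variables, the constants $O_1,\dots,O_k$, and $\perp$ with $\to$. An $\bar O$-type is defined by: each $O_i$ is an $\bar O$-type; if $B$ is an $\bar O$-type then $A\to B$ is an $\bar O$-type for any type $A$. The system $\vdash_{\bar O}$ derives judgements $\Gamma\vdash_{\bar O}t:A;\Delta$ by the rules: (ax) $\Gamma\vdash_{\bar O}x:A;\Delta$ if $x:A\in\Gamma$, provided $\Delta$ contains no declaration $a:C$ with $C$ an $\bar O$-type; ($\to_i$) from $\Gamma,x:A\vdash_{\bar O}t:B;\Delta$ infer $\Gamma\vdash_{\bar O}\lambda x.t:A\to B;\Delta$; ($\to_e$) from $\Gamma\vdash_{\bar O}u:A\to B;\Delta$ and $\Gamma\vdash_{\bar O}v:A;\Delta$ infer $\Gamma\vdash_{\bar O}(u\;v):B;\Delta$, provided $B$ is not an $\bar O$-type; ($\mu$) from $\Gamma\vdash_{\bar O}t:\perp;\Delta,a:A$ infer $\Gamma\vdash_{\bar O}\mu a.t:A;\Delta$; ($\perp$) from $\Gamma\vdash_{\bar O}t:A;\Delta,a:A$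 infer $\Gamma\vdash_{\bar O}(a\;t):\perp;\Delta,a:A$. *)

From Stdlib Require Import List Arith.
Import ListNotations.

(* lambda-variables and mu-variables: two disjoint infinite sets, both coded by nat *)
Definition lvar := nat.
Definition mvar := nat.

Inductive term : Type :=
| Var : lvar -> term
| Lam : lvar -> term -> term
| App : term -> term -> term
| Mu : mvar -> term -> term
| Named : mvar -> term -> term.

(* Types: propositional variables, constants O_i (i : nat), bottom, arrow.
   The constants O_i are a separate constructor, hence distinct ("fresh")
   from every propositional variable. *)
Inductive ty : Type :=
| TVar : nat -> ty
| TO : nat -> ty
| TBot : ty
| TArr : ty -> ty -> ty.

Fixpoint isOtype (k : nat) (A : ty) : Prop :=
  match A with
  | TO i => 1 <= i <= k
  | TArr _ B => isOtype k B
  | _ => False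
  end.

Definition lctx := list (lvar * ty).
Definition mctx := list (mvar * ty).

Definition noOdecl (k : nat) (D : mctx) : Prop :=
  forall a C, In (a, C) D -> ~ isOtype k C.

(* The system |-_Obar :  derivO k G t A D  means  G |-_Obar t : A ; D *)
Inductive derivO (k : nat) : lctx -> term -> ty -> mctx -> Prop :=
| dO_ax : forall G D x A,
    In (x, A) G -> noOdecl k D -> derivO k G (Var x) A D
| dO_lam : forall G D x A B t,
    derivO k ((x, A) :: G) t B D -> derivO k G (Lam x t) (TArr A B) D
| dO_app : forall G D u v A B,
    derivO k G u (TArr A B) D -> derivO k G v A D -> ~ isOtype k B ->
    derivO k G (App u v) B D
| dO_mu : forall G D a A t,
    derivO k G t TBot ((a, A) :: D) -> derivO k G (Mu a t) A D
| dO_bot : forall G D a A t,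
    In (a, A) D -> derivO k G t A D -> derivO k G (Named a t) TBot D.

From Stdlib Require Import List Arith.

(* A term of a non-arrow Obar-type cannot be an abstraction (wrong type shape),
   an application (side condition of the elimination rule), or a mu-abstraction
   (its premise would put an Obar-type into Delta, which the axioms forbid). *)

Lemma derivO_noOdecl k G t A D : derivO k G t A D -> noOdecl k D.
Proof.
  induction 1 as [| | | G D a A t _ IH | ]; auto.
  intros b C HbC; apply (IH b C); right; exact HbC.
Qed.

Lemma derivO_Otype_atom k G t A D :
  isOtype k A -> (forall B C, A <> TArr B C) -> derivO k G t A D ->
  exists x, t = Var x /\ In (x, A) G.
Proof.
  intros HA Hnarr H; inversion H as
    [G' D' x A' HxA _ | G' D' x B C u _ | G' D' u v B A' _ _ HnA
    | G' D' a A' u Hu | ]; subst.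
  - eauto.
  - exfalso; exact (Hnarr B C eq_refl).
  - contradiction.
  - exfalso; apply (derivO_noOdecl _ _ _ _ _ Hu a A); [left; reflexivity | exact HA].
  - contradiction.
Qed.

Theorem mainTheorem16 (k : nat) (G : lctx) (D : mctx) (l : nat) (t : term) :
  1 <= l <= k ->
  derivO k G t (TO l) D ->
  exists x, t = Var x /\ In (x, TO l) G.
Proof.
  intros Hl; apply derivO_Otype_atom; [exact Hl | discriminate].
Qed.
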